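(* Assume (A1). Let $g:\mathcal X\to\mathbb R$ with $0<\|\nabla g\|_\infty\le\|g\|_\infty$, and let $u$ be the solution of problem (P) with boundary data $g|_\Gamma$. Then for any two neighbors $x,y$ in the graph (i.e. $w_{xy}>0$), $$|u(x)-u(y)|\le\left(\frac{4\log\big(\|g\|_\infty\|\nabla g\|_\infty^{-1}\big)}{1-\alpha+2\alpha\delta}+5\right)\|\nabla g\|_\infty.$$
   Context: $\mathcal X$ is a finite vertex set and $W=(w_{xy})$ a symmetric matrix of nonnegative weights defining a connected graph, with degrees $d_x=\sum_{y}w_{xy}$ and neighbor sets $N_x=\{y\in\mathcal X:w_{xy}>0\}$. For $p\ge2$, $\alpha=1/(p-1)$, and $$\mathcal L_p u(x)=\alpha\,\frac{1}{d_x}\sum_{y}w_{xy}\big(u(x)-u(y)\big)+(1-\alpha)\Big(u(x)-\tfrac12\big(\max_{N_x}u+\min_{N_x}u\big)\Big).$$ $\Gamma\subset\mathcal X$ is the set of labeled vertices. Problem (P): find $u:\mathcal X\to\mathbb R$ with $\mathcal L_pu(x)=0$ for $x\in\mathcal X\setminus\Gamma$ and $u=g$ on $\Gamma$; it has a unique solution. Assumption (A1): $\Gamma\cap N_x\neq\varnothing$ for every $x\in\mathcal X$. Notation: $\|g\|_\infty=\max_{x\in\mathcal X}|g(x)|$, $\|\nabla g\|_\infty=\max_{x,y\in\mathcal X}|g(x)-g(y)|\mathbb 1_{w_{xy}>0}$, and $$\delta=\min_{x\in\mathcal X}\frac{\sum_{y\in\mathcal X}w_{xy}\mathbb 1_{y\in\Gamma}}{\sum_{z\in\mathcal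 X}w_{xz}}.$$ *)

From mathcomp Require Import all_boot all_order all_algebra.
From mathcomp Require Import all_classical all_reals all_analysis.
Set Implicit Arguments. Unset Strict Implicit. Unset Printing Implicit Defensive.
Import Order.TTheory GRing.Theory Num.Theory.
Local Open Scope ring_scope.

Section Graph.
Variables (R : realType) (T : finType) (w : T -> T -> R).

Definition adj : rel T := fun x y => 0 < w x y.

Definition connected_graph : Prop := forall x y : T, connect adj x y.

Definition deg (x : T) : R := \sum_(y : T) w x y.

(* max and min of u over the neighbor set N_x (if N_x is empty, 0; never
   used in that case under (A1)). The initial value u y0 has y0 \in N_x. *)
Definition maxN (u : T -> R) (x : T) : R :=
  match [pick y | adj x y] with
  | Some y0 => \big[Num.max/u y0]_(y | adj x y) u y
  | None => 0
  end.
Definition minN (u : T -> R) (x : T) : R :=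
  match [pick y | adj x y] with
  | Some y0 => \big[Num.min/u y0]_(y | adj x y) u y
  | None => 0
  end.

Definition alpha (p : R) : R := 1 / (p - 1).

Definition Lp (p : R) (u : T -> R) (x : T) : R :=
  alpha p * ((1 / deg x) * \sum_(y : T) w x y * (u x - u y))
  + (1 - alpha p) * (u x - (maxN u x + minN u x) / 2).

Definition solves_P (p : R) (Gam : {set T}) (g u : T -> R) : Prop :=
  (forall x, x \notin Gam -> Lp p u x = 0) /\ (forall x, x \in Gam -> u x = g x).

Definition A1 (Gam : {set T}) : Prop := forall x : T, exists2 y, y \in Gam & adj x y.

Definition supnorm (g : T -> R) : R := \big[Num.max/0]_(x : T) `|g x|.

Definition gradnorm (g : T -> R) : R :=
  \big[Num.max/0]_(xy : T * T | adj xy.1 xy.2) `|g xy.1 - g xy.2|.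

(* delta = min_x (sum_{y in Gamma} w_xy) / d_x ; each ratio lies in [0,1],
   so using 1 as the neutral element of the min is harmless. *)
Definition delta (Gam : {set T}) : R :=
  \big[Num.min/1]_(x : T) ((\sum_(y in Gam) w x y) / deg x).

End Graph.

(* Comparison principle: let h be K-Lipschitz along edges with u <= h on Gam, and
   let z maximise u - h with m := u z - h z > 0 (so z is off Gam).  By (A1) the
   averaging part of L_p u(z) is at least delta m - K and the midrange part at
   least m/2 - K, so L_p u(z) = 0 forces c m <= 2K with c := 1 - alpha + 2 alpha delta.
   Taking h = +-g and K = ||grad g|| gives |u - g| <= 2 ||grad g|| / c; taking the
   constant h = ||g|| gives |u| <= ||g||.  Neighbours thus differ by at most
   min((4/c + 1) ||grad g||, 2 ||g||), and since e <= (4/3)^4 an elementary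
   estimate turns this minimum into the logarithmic bound. *)

From mathcomp Require Import all_boot all_order all_algebra.
From mathcomp Require Import all_classical all_reals all_analysis.
From mathcomp Require Import ring lra.
Import Order.TTheory GRing.Theory Num.Theory.
Set Implicit Arguments. Unset Strict Implicit.
Local Open Scope ring_scope.

Lemma alpha_gt0 (R : realType) (p : R) : 2 <= p -> 0 < alpha p.
Proof. by move=> p_ge2; rewrite /alpha divr_gt0 //; lra. Qed.

Lemma alpha_le1 (R : realType) (p : R) : 2 <= p -> alpha p <= 1.
Proof. by move=> p_ge2; rewrite /alpha ler_pdivrMr ?mul1r; lra. Qed.

Lemma ln_ge1BV (R : realType) (x : R) : 0 < x -> 1 - x^-1 <= ln x.
Proof.
move=> x_gt0; have xV_gt0 : 0 < x^-1 by rewrite invr_gt0.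
have := @le_ln1Dx R (x^-1 - 1); rewrite subrKC lnV ?posrE //.
by move=> /(_ ltac:(lra)); lra.
Qed.

Lemma min_bounds_le_log_bound (R : realType) (B c D G : R) :
  0 < D <= G -> 0 < c <= 2 -> B <= (4 / c + 1) * D -> B <= 2 * G -> B <= (4 * ln (G / D) / c + 5) * D.
Proof.
move=> /andP[D_gt0 D_le_G] /andP[c_gt0 c_le2] B_le1 B_le2.
set r := G / D.
have r_ge1 : 1 <= r by rewrite /r ler_pdivlMr // mul1r.
have r_gt0 : 0 < r by lra.
have ln_ge0 : 0 <= ln r := ln_ge0 r_ge1.
have [ln_ge1|ln_lt1] := leP 1 (ln r).
  apply: le_trans B_le1 _; rewrite ler_pM2r //.
  have : 4 / c <= 4 * ln r / c by apply: ler_wpM2r; rewrite ?invr_ge0; lra.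
  lra.
apply: le_trans B_le2 _.
have -> : G = r * D by rewrite /r mulfVK // gt_eqF.
rewrite mulrA ler_pM2r //.
have ln_ge1 : 1 <= ln (256 / 81 : R).
  have -> : 256 / 81 = (4 / 3) ^+ 4 :> R by rewrite !exprS expr0; field.
  rewrite lnXn // -[_ *+ 4]mulr_natr; have := @ln_ge1BV R (4 / 3) ltac:(lra).
  rewrite invf_div; lra.
have r_lt : r < 256 / 81 by rewrite -ltr_ln ?posrE //; lra.
have : r - 1 <= ln r * r.
  have : (1 - r^-1) * r <= ln r * r by rewrite ler_pM2r // ln_ge1BV.
  by rewrite mulrBl mulVf ?gt_eqF // mul1r.
have : 2 * ln r <= 4 * ln r / c by rewrite ler_pdivlMr //; nra.
have : 0 <= (r - 1) * (256 / 81 - r) by apply: mulr_ge0; lra.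
nra.
Qed.

Section NeighborExtrema.
Variables (R : realType) (T : finType) (w : T -> T -> R).

Lemma maxN_ge (u : T -> R) x y : adj w x y -> u y <= maxN w u x.
Proof.
move=> xy; rewrite /maxN; case: pickP => [y0 _|/(_ y)]; last by rewrite xy.
exact: le_bigmax_cond.
Qed.

Lemma minN_le (u : T -> R) x y : adj w x y -> minN w u x <= u y.
Proof.
move=> xy; rewrite /minN; case: pickP => [y0 _|/(_ y)]; last by rewrite xy.
exact: bigmin_le_cond.
Qed.

Lemma maxN_le (u : T -> R) x B : (exists y, adj w x y) ->
  (forall y, adj w x y -> u y <= B) -> maxN w u x <= B.
Proof.
move=> [y xy] uB; rewrite /maxN; case: pickP => [y0 xy0|/(_ y)]; last by rewrite xy.
exact: bigmax_le (uB _ xy0) uB.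
Qed.

Lemma minN_ge (u : T -> R) x B : (exists y, adj w x y) ->
  (forall y, adj w x y -> B <= u y) -> B <= minN w u x.
Proof.
move=> [y xy] Bu; rewrite /minN; case: pickP => [y0 xy0|/(_ y)]; last by rewrite xy.
exact: le_bigmin (Bu _ xy0) Bu.
Qed.

Lemma maxN_opp (u : T -> R) x : (exists y, adj w x y) ->
  maxN w (fun z => - u z) x = - minN w u x.
Proof.
move=> xN; apply: le_anti; apply/andP; split.
  by apply: maxN_le => // y xy; rewrite lerN2; apply: minN_le.
rewrite lerNl; apply: minN_ge => // y xy; rewrite lerNl.
exact: (maxN_ge (fun z => - u z)).
Qed.

Lemma minN_opp (u : T -> R) x : (exists y, adj w x y) ->
  minN w (fun z => - u z) x = - maxN w u x.
Proof.
move=> xN; apply: le_anti; apply/andP; split; last first.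
  by apply: minN_ge => // y xy; rewrite lerN2; apply: maxN_ge.
rewrite lerNr; apply: maxN_le => // y xy; rewrite lerNr.
exact: (minN_le (fun z => - u z)).
Qed.

Lemma Lp_opp p (u : T -> R) x : (exists y, adj w x y) ->
  Lp w p (fun z => - u z) x = - Lp w p u x.
Proof.
move=> xN; rewrite /Lp maxN_opp // minN_opp //.
have -> : \sum_y w x y * (- u x - - u y) = - \sum_y w x y * (u x - u y).
  by rewrite -sumrN; apply: eq_bigr => y _; ring.
ring.
Qed.

End NeighborExtrema.

Section GraphQuantities.
Variables (R : realType) (T : finType) (w : T -> T -> R).
Hypothesis w_ge0 : forall x y, 0 <= w x y.

Lemma deg_gt0 x y : adj w x y -> 0 < deg w x.
Proof. by move=> xy; rewrite /deg (bigD1 y) //= ltr_pwDl // sumr_ge0. Qed.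

Lemma gradnorm_ge (g : T -> R) x y : adj w x y -> `|g x - g y| <= gradnorm w g.
Proof.
by move=> xy; apply: (le_bigmax_cond _ (fun xy : T * T => `|g xy.1 - g xy.2|) (j := (x, y))).
Qed.

Lemma gradnorm_lip (g : T -> R) x y : adj w x y -> g y <= g x + gradnorm w g.
Proof. by move=> /(gradnorm_ge g); rewrite distrC => /ler_distlDr. Qed.

Lemma gradnorm_opp (g : T -> R) : gradnorm w (fun z => - g z) = gradnorm w g.
Proof. by apply: eq_bigr => xy _; rewrite -opprD normrN. Qed.

Lemma supnorm_ge (g : T -> R) x : `|g x| <= supnorm g.
Proof. exact: (le_bigmax _ (fun z => `|g z|)). Qed.

Lemma supnorm_opp (g : T -> R) : supnorm (fun z => - g z) = supnorm g.
Proof. by apply: eq_bigr => z _; rewrite normrN. Qed.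

Lemma delta_le (Gam : {set T}) x : delta w Gam <= (\sum_(y in Gam) w x y) / deg w x.
Proof. exact: (bigmin_le_cond _ (fun x => (\sum_(y in Gam) w x y) / deg w x)). Qed.

Lemma delta_le1 (Gam : {set T}) : delta w Gam <= 1.
Proof. exact: bigmin_le_id. Qed.

Lemma delta_gt0 (Gam : {set T}) : A1 w Gam -> 0 < delta w Gam.
Proof.
move=> A1Gam; apply/bigmin_gtP; split => // x _.
have [y yGam xy] := A1Gam x.
apply: divr_gt0; last exact: deg_gt0 xy.
by rewrite (bigD1 y) //= ltr_pwDl // sumr_ge0.
Qed.

End GraphQuantities.

Section Comparison.
Variables (R : realType) (T : finType) (w : T -> T -> R) (p : R) (Gam : {set T}).
Hypotheses (w_ge0 : forall x y, 0 <= w x y) (p_ge2 : 2 <= p) (A1Gam : A1 w Gam).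

Local Notation c := (1 - alpha p + 2 * alpha p * delta w Gam).

Lemma rate_gt0 : 0 < c.
Proof.
have := alpha_gt0 p_ge2; have := alpha_le1 p_ge2; have := delta_gt0 w_ge0 A1Gam.
nra.
Qed.

Lemma rate_le2 : c <= 2.
Proof.
have := alpha_gt0 p_ge2; have := alpha_le1 p_ge2; have := delta_le1 w Gam.
nra.
Qed.

Lemma neighbor_exists x : exists y, adj w x y.
Proof. by have [y _ xy] := A1Gam x; exists y. Qed.

Section MaximumPoint.
Variables (u h : T -> R) (K : R) (z : T).
Hypotheses (h_lip : forall x y, adj w x y -> h y <= h x + K)
  (u_le_h : forall x, x \in Gam -> u x <= h x)
  (z_max : forall y, u y - h y <= u z - h z).

Lemma mean_term_ge : 0 <= u z - h z ->
  (u z - h z) * delta w Gam - K <= 1 / deg w z * \sum_y w z y * (u z - u y).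
Proof.
move=> m_ge0.
have edge y : adj w z y -> (if y \in Gam then u z - h z else 0) - K <= u z - u y.
  move=> zy; have := h_lip zy; have := z_max y.
  by case: ifP => [/u_le_h|_]; lra.
have sum_ge : (u z - h z) * \sum_(y in Gam) w z y - K * deg w z
    <= \sum_y w z y * (u z - u y).
  rewrite /deg big_mkcond /= !mulr_sumr -sumrB; apply: ler_sum => y _.
  have [->|wzy_neq0] := eqVneq (w z y) 0; first by rewrite if_same; lra.
  have zy : adj w z y by rewrite /adj lt_def wzy_neq0 w_ge0.
  have := edge y zy; have := w_ge0 z y; case: ifP => _; nra.
have [y0 _ zy0] := A1Gam z; have deg_z_gt0 := deg_gt0 w_ge0 zy0.
have := delta_le w Gam z; rewrite ler_pdivlMr // => delta_deg.
rewrite mul1r ler_pdivlMl //; nra.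
Qed.

Lemma midrange_term_ge :
  (u z - h z) / 2 - K <= u z - (maxN w u z + minN w u z) / 2.
Proof.
have max_le : maxN w u z <= u z - h z + h z + K.
  apply: maxN_le => [|y zy]; first exact: neighbor_exists.
  by have := h_lip zy; have := z_max y; lra.
have [y0 y0Gam zy0] := A1Gam z.
have min_le : minN w u z <= h z + K.
  by have := minN_le u zy0; have := h_lip zy0; have := u_le_h y0Gam; lra.
lra.
Qed.

End MaximumPoint.

Lemma comparison (u h : T -> R) (K : R) : 0 <= K ->
  (forall x y, adj w x y -> h y <= h x + K) ->
  (forall x, x \notin Gam -> Lp w p u x = 0) ->
  (forall x, x \in Gam -> u x <= h x) ->
  forall x, (u x - h x) * c <= 2 * K.
Proof.
move=> K_ge0 h_lip u_sol u_le_h x.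
have [z _ z_max] := @arg_maxP _ _ T x predT (fun y => u y - h y) isT.
have c_gt0 := rate_gt0.
apply: le_trans (_ : (u z - h z) * c <= 2 * K).
  by rewrite ler_pM2r //; apply: z_max.
have [m_le0|m_gt0] := leP (u z - h z) 0; first nra.
have zGam : z \notin Gam by apply/negP => /u_le_h; lra.
have z_max' y : u y - h y <= u z - h z by apply: z_max.
have mean := mean_term_ge h_lip u_le_h z_max' (ltW m_gt0).
have mid := midrange_term_ge h_lip u_le_h z_max'.
have := u_sol z zGam; rewrite /Lp => L0.
have := alpha_gt0 p_ge2; have := alpha_le1 p_ge2; nra.
Qed.

Lemma solves_P_opp (g u : T -> R) : solves_P w p Gam g u ->
  solves_P w p Gam (fun x => - g x) (fun x => - u x).
Proof.
move=> [u_sol u_Gam]; split => x xGam; last by rewrite u_Gam.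
by rewrite Lp_opp ?u_sol ?oppr0 //; apply: neighbor_exists.
Qed.

Lemma solves_P_sub_data_le (g u : T -> R) x : solves_P w p Gam g u ->
  (u x - g x) * c <= 2 * gradnorm w g.
Proof.
move=> [u_sol u_Gam]; apply: comparison => //.
- exact: bigmax_ge_id.
- exact: gradnorm_lip.
- by move=> y /u_Gam ->.
Qed.

Lemma solves_P_dist_data (g u : T -> R) x : solves_P w p Gam g u ->
  `|u x - g x| <= 2 * gradnorm w g / c.
Proof.
move=> u_sol; rewrite ler_pdivlMr ?rate_gt0 //.
have := solves_P_sub_data_le x u_sol.
have := solves_P_sub_data_le x (solves_P_opp u_sol); rewrite gradnorm_opp.
by case: (ler0P (u x - g x)) => _; lra.
Qed.

Lemma solves_P_le_supnorm (g u : T -> R) x : solves_P w p Gam g u -> u x <= supnorm g.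
Proof.
move=> [u_sol u_Gam].
have : (u x - supnorm g) * c <= 2 * 0.
  apply: (comparison (h := fun=> supnorm g)) => // [y y' _|y /u_Gam ->].
    by rewrite addr0.
  exact: le_trans (ler_norm _) (supnorm_ge _ _).
have := rate_gt0; nra.
Qed.

Lemma solves_P_norm_le (g u : T -> R) x : solves_P w p Gam g u -> `|u x| <= supnorm g.
Proof.
move=> u_sol; have := solves_P_le_supnorm x (solves_P_opp u_sol).
by rewrite supnorm_opp ler_norml (solves_P_le_supnorm x u_sol) lerNl andbT.
Qed.

End Comparison.

Theorem mainTheorem5 (R : realType) (T : finType) (w : T -> T -> R)
    (Gam : {set T}) (p : R) (g u : T -> R) :
  (forall x y, w x y = w y x) ->
  (forall x y, 0 <= w x y) ->
  connected_graph w ->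
  2 <= p ->
  A1 w Gam ->
  0 < gradnorm w g ->
  gradnorm w g <= supnorm g ->
  solves_P w p Gam g u ->
  forall x y, 0 < w x y ->
  `|u x - u y| <=
    (4 * ln (supnorm g / gradnorm w g) / (1 - alpha p + 2 * alpha p * delta w Gam) + 5)
    * gradnorm w g.
Proof.
move=> _ w_ge0 _ p_ge2 A1Gam grad_gt0 grad_le_sup u_sol x y xy.
apply: min_bounds_le_log_bound; rewrite ?grad_gt0 ?rate_gt0 ?rate_le2 //.
- have := solves_P_dist_data w_ge0 p_ge2 A1Gam x u_sol.
  have := solves_P_dist_data w_ge0 p_ge2 A1Gam y u_sol.
  have := gradnorm_ge g xy; have := ler_distD (g x) (u x) (u y).
  have := ler_distD (g y) (g x) (u y); rewrite (distrC (u y)) mulrDl mul1r mulrAC.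
  lra.
- have := solves_P_norm_le w_ge0 p_ge2 A1Gam x u_sol.
  have := solves_P_norm_le w_ge0 p_ge2 A1Gam y u_sol.
  have := ler_normB (u x) (u y); lra.
Qed.
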